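(* Let $a_1,\ldots,a_k\in\mathbb R^d$ and $b_1,\ldots,b_k\in\mathbb R^d$ be two sets of orthonormal vectors such that $\langle a_i,b_i\rangle^2\ge 1-\epsilon$ for each $i\in[k]$. Then $\left\|\sum_{i=1}^k a_i^{\otimes 4}-b_i^{\otimes 4}\right\|_2\le 4\sqrt\epsilon$.
   Context: The 4-tensor $\sum_i a_i^{\otimes4}-b_i^{\otimes4}$ is viewed as the $d^2\times d^2$ matrix $\sum_i (a_i^{\otimes 2})(a_i^{\otimes2})^\top-(b_i^{\otimes2})(b_i^{\otimes2})^\top$, and $\|\cdot\|_2$ is its spectral norm. *)

From HB Require Import structures.
From mathcomp Require Import all_boot all_order all_algebra.
From mathcomp Require Import all_classical all_reals.
Set Implicit Arguments. Unset Strict Implicit. Unset Printing Implicit Defensive.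
Import Order.TTheory GRing.Theory Num.Theory.
Local Open Scope ring_scope.
Local Open Scope classical_set_scope.

Definition dotv {R : realType} {n : nat} (x y : 'cV[R]_n) : R := (x^T *m y) 0 0.

Definition vnorm {R : realType} {n : nat} (x : 'cV[R]_n) : R := Num.sqrt (dotv x x).

(* a^{\otimes 2} flattened to a vector of R^(d*d) (entries a_p a_q). *)
Definition tensor2 {R : realType} {d : nat} (a : 'cV[R]_d) : 'cV[R]_(d * d) :=
  (mxvec (a *m a^T))^T.

Definition spectral_norm {R : realType} {n : nat} (M : 'M[R]_n) : R :=
  sup [set vnorm (M *m x) | x in [set x : 'cV[R]_n | vnorm x = 1]].

(* The 4-tensor sum_i a_i^{⊗4} - b_i^{⊗4} viewed as a d^2 x d^2 matrix. *)
Definition quartic_diff {R : realType} {d k : nat} (a b : 'I_k -> 'cV[R]_d)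
  : 'M[R]_(d * d) :=
  \sum_(i < k) (tensor2 (a i) *m (tensor2 (a i))^T
                - tensor2 (b i) *m (tensor2 (b i))^T).

From mathcomp Require Import all_boot all_order all_algebra.
From mathcomp Require Import all_classical all_reals.
From mathcomp Require Import ring lra.
Set Implicit Arguments.
Unset Strict Implicit.
Unset Printing Implicit Defensive.
Import Order.TTheory GRing.Theory Num.Theory.
Local Open Scope ring_scope.

(* Write M for the matrix and K for 4 sqrt eps. Since M is symmetric, polarization
   reduces ||M|| <= K to |z^T M z| <= K |z|^2. Flip the signs of the b_i so that
   <a_i, b_i> >= c := sqrt (1 - eps), and put u_i = <a_i⊗a_i, z>, v_i = <b_i⊗b_i, z>.
   Then z^T M z = \sum_i (u_i - v_i)(u_i + v_i), whose square is at most X Y with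
   X = \sum_i (u_i - v_i)^2 and Y = \sum_i (u_i + v_i)^2. Bessel's inequality for the
   orthonormal families (a_i⊗a_i) and (b_i⊗b_i) gives X + Y <= 4 |z|^2. Since
   a⊗a - b⊗b = a⊗(a - b) + (a - b)⊗b and the families (a_i⊗(a_i - b_i)) and
   ((a_i - b_i)⊗b_i) are orthogonal with squared norms |a_i - b_i|^2 <= 2 - 2c,
   Bessel's inequality again gives X <= 8 (1 - c) |z|^2. Under these two constraints
   X Y <= 16 (1 - c^2) |z|^4 <= 16 eps |z|^4. *)

Definition orthonormal_family (R : realType) (n : nat) (I : finType)
  (e : I -> 'cV[R]_n) := forall i j, dotv (e i) (e j) = (i == j)%:R.

Section DotProduct.
Variables (R : realType) (n : nat).
Implicit Types (x y z : 'cV[R]_n) (t : R).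

Lemma dotvE x y : dotv x y = \sum_i x i 0 * y i 0.
Proof. by rewrite /dotv mxE; apply: eq_bigr => i _; rewrite mxE. Qed.

Lemma dotvC x y : dotv x y = dotv y x.
Proof. by rewrite !dotvE; apply: eq_bigr => i _; rewrite mulrC. Qed.

Lemma dotvDr x y z : dotv x (y + z) = dotv x y + dotv x z.
Proof. by rewrite /dotv mulmxDr mxE. Qed.

Lemma dotvBr x y z : dotv x (y - z) = dotv x y - dotv x z.
Proof. by rewrite /dotv mulmxBr !mxE. Qed.

Lemma dotvZr x y t : dotv x (t *: y) = t * dotv x y.
Proof. by rewrite /dotv -scalemxAr mxE. Qed.

Lemma dotvDl x y z : dotv (x + y) z = dotv x z + dotv y z.
Proof. by rewrite dotvC dotvDr !(dotvC z). Qed.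

Lemma dotvBl x y z : dotv (x - y) z = dotv x z - dotv y z.
Proof. by rewrite dotvC dotvBr !(dotvC z). Qed.

Lemma dotvZl x y t : dotv (t *: x) y = t * dotv x y.
Proof. by rewrite dotvC dotvZr dotvC. Qed.

Lemma dotv_sumr (I : finType) x (F : I -> 'cV[R]_n) :
  dotv x (\sum_i F i) = \sum_i dotv x (F i).
Proof. by rewrite /dotv mulmx_sumr summxE. Qed.

Lemma dotv_suml (I : finType) (F : I -> 'cV[R]_n) y :
  dotv (\sum_i F i) y = \sum_i dotv (F i) y.
Proof. by rewrite dotvC dotv_sumr; apply: eq_bigr => i _; rewrite dotvC. Qed.

Lemma dotv_ge0 x : 0 <= dotv x x.
Proof. by rewrite dotvE sumr_ge0 // => i _; rewrite -expr2 sqr_ge0. Qed.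

Lemma dotv_subsqr x y : dotv (x - y) (x - y) = dotv x x + dotv y y - 2 * dotv x y.
Proof. by rewrite !dotvBl !dotvBr (dotvC y x); ring. Qed.

Lemma dotv_parallelogram x y :
  dotv (x + y) (x + y) + dotv (x - y) (x - y) = 2 * dotv x x + 2 * dotv y y.
Proof. by rewrite !dotvBl !dotvBr !dotvDl !dotvDr (dotvC y x); ring. Qed.

End DotProduct.

Section CauchySchwarz.
Variable R : realType.

Lemma cauchy_schwarz_sum (I : finType) (f g : I -> R) :
  (\sum_i f i * g i) ^+ 2 <= (\sum_i f i ^+ 2) * (\sum_i g i ^+ 2).
Proof.
pose D i j := f i ^+ 2 * g j ^+ 2 - f i * g i * (f j * g j).
have gap : (\sum_i f i ^+ 2) * (\sum_i g i ^+ 2) - (\sum_i f i * g i) ^+ 2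
    = \sum_i \sum_j D i j.
  by rewrite expr2 !big_distrlr -sumrB; apply: eq_bigr => i _; rewrite -sumrB.
(* Lagrange's identity *)
have lagrange : \sum_i \sum_j (f i * g j - f j * g i) ^+ 2
    = \sum_i \sum_j D i j + \sum_i \sum_j D j i.
  rewrite -big_split; apply: eq_bigr => i _; rewrite -big_split.
  by apply: eq_bigr => j _; rewrite /D /=; ring.
have : 0 <= \sum_i \sum_j (f i * g j - f j * g i) ^+ 2.
  by apply: sumr_ge0 => i _; apply: sumr_ge0 => j _; apply: sqr_ge0.
rewrite lagrange [X in _ + X]exchange_big -gap /=; lra.
Qed.

Lemma dotv_sqr_le (n : nat) (x y : 'cV[R]_n) :
  dotv x y ^+ 2 <= dotv x x * dotv y y.
Proof.
rewrite !dotvE; under [X in _ <= X * _]eq_bigr do rewrite -expr2.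
under [X in _ <= _ * X]eq_bigr do rewrite -expr2.
exact: cauchy_schwarz_sum.
Qed.

Lemma bessel_orthogonal (n : nat) (I : finType) (g : I -> 'cV[R]_n) (z : 'cV[R]_n) m :
  (forall i j, i != j -> dotv (g i) (g j) = 0) ->
  (forall i, dotv (g i) (g i) <= m) -> 0 <= m ->
  \sum_i dotv (g i) z ^+ 2 <= m * dotv z z.
Proof.
move=> gij_eq0 gii_le m_ge0.
pose s i := dotv (g i) z; pose w := \sum_i s i *: g i.
have wz : dotv w z = \sum_i s i ^+ 2.
  by rewrite dotv_suml; apply: eq_bigr => i _; rewrite dotvZl expr2.
have ww : dotv w w <= m * \sum_i s i ^+ 2.
  rewrite dotv_suml mulr_sumr; apply: ler_sum => i _.
  rewrite dotvZl dotv_sumr (bigD1 i) //= big1 => [|j ji]; last first.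
    by rewrite dotvZr gij_eq0 ?mulr0 // eq_sym.
  by rewrite addr0 dotvZr mulrA -expr2 mulrC ler_wpM2r ?sqr_ge0.
have sigma_ge0 : 0 <= \sum_i s i ^+ 2 by apply: sumr_ge0 => i _; apply: sqr_ge0.
have : (\sum_i s i ^+ 2) ^+ 2 <= (\sum_i s i ^+ 2) * (m * dotv z z).
  rewrite -{1}wz mulrA [_ * m]mulrC.
  by apply: le_trans (dotv_sqr_le w z) _; rewrite ler_wpM2r ?dotv_ge0.
have : 0 <= m * dotv z z by rewrite mulr_ge0 ?dotv_ge0.
move: sigma_ge0; rewrite -/s; set sigma := \sum_i _; set P := m * _; nra.
Qed.

End CauchySchwarz.

Section TensorProduct.
Variables (R : realType) (m n : nat).
Implicit Types (x : 'cV[R]_m) (y : 'cV[R]_n) (t : R).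

Definition tprod x y : 'cV[R]_(m * n) := (mxvec (x *m y^T))^T.

Lemma dotv_tprod x y x' y' :
  dotv (tprod x y) (tprod x' y') = dotv x x' * dotv y y'.
Proof.
rewrite /dotv /tprod trmxK -[x in mxvec (x *m _)]trmxK mxvec_dotmul trmxK.
rewrite !mulmxA -(mulmxA (x^T *m x')) mxE big_ord1; congr (_ * _).
by rewrite -(trmxK (y'^T *m y)) trmx_mul trmxK mxE.
Qed.

Lemma tprodBl x x' y : tprod (x - x') y = tprod x y - tprod x' y.
Proof. by rewrite /tprod mulmxBl !linearB. Qed.

Lemma tprodBr x y y' : tprod x (y - y') = tprod x y - tprod x y'.
Proof. by rewrite /tprod linearB mulmxBr !linearB. Qed.

Lemma tprodZl t x y : tprod (t *: x) y = t *: tprod x y.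
Proof. by rewrite /tprod -scalemxAl !linearZ. Qed.

Lemma tprodZr t x y : tprod x (t *: y) = t *: tprod x y.
Proof. by rewrite /tprod linearZ -scalemxAr !linearZ. Qed.

Variable I : finType.
Implicit Types (z : 'cV[R]_(m * n)) (mu : R).

Lemma bessel_tprodl (e : I -> 'cV[R]_m) (f : I -> 'cV[R]_n) z mu :
  orthonormal_family e -> (forall i, dotv (f i) (f i) <= mu) -> 0 <= mu ->
  \sum_i dotv (tprod (e i) (f i)) z ^+ 2 <= mu * dotv z z.
Proof.
move=> e_on f_le mu_ge0; apply: bessel_orthogonal => // [i j ij|i].
  by rewrite dotv_tprod e_on (negbTE ij) mul0r.
by rewrite dotv_tprod e_on eqxx mul1r.
Qed.

Lemma bessel_tprodr (e : I -> 'cV[R]_n) (f : I -> 'cV[R]_m) z mu :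
  orthonormal_family e -> (forall i, dotv (f i) (f i) <= mu) -> 0 <= mu ->
  \sum_i dotv (tprod (f i) (e i)) z ^+ 2 <= mu * dotv z z.
Proof.
move=> e_on f_le mu_ge0; apply: bessel_orthogonal => // [i j ij|i].
  by rewrite dotv_tprod e_on (negbTE ij) mulr0.
by rewrite dotv_tprod e_on eqxx mulr1.
Qed.

End TensorProduct.

Lemma tensor2_tprod (R : realType) (d : nat) (a : 'cV[R]_d) : tensor2 a = tprod a a.
Proof. by []. Qed.

Section SymmetricForm.
Variables (R : realType) (n : nat).
Implicit Types (x y : 'cV[R]_n) (M : 'M[R]_n).

Lemma dotv_outer x y : dotv y ((x *m x^T) *m y) = dotv x y ^+ 2.
Proof.
rewrite /dotv !mulmxA -(mulmxA (y^T *m x)) mxE big_ord1 expr2; congr (_ * _).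
by rewrite -(trmxK (y^T *m x)) trmx_mul trmxK mxE.
Qed.

Lemma dotv_mulmx_sym M x y : M^T = M -> dotv x (M *m y) = dotv y (M *m x).
Proof.
move=> MT; rewrite /dotv -[in RHS]MT -[in RHS](trmxK x) -!trmx_mul.
by rewrite mulmxA [RHS]mxE.
Qed.

Lemma polarization_sym M x y : M^T = M ->
  dotv (x + y) (M *m (x + y)) - dotv (x - y) (M *m (x - y)) = 4 * dotv x (M *m y).
Proof.
move=> MT; rewrite mulmxDr mulmxBr !dotvBl !dotvBr !dotvDl !dotvDr.
by rewrite (dotv_mulmx_sym y x MT); ring.
Qed.

Lemma spectral_norm_sym_le M K : M^T = M -> 0 <= K ->
  (forall z, `|dotv z (M *m z)| <= K * dotv z z) -> spectral_norm M <= K.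
Proof.
move=> MT K_ge0 quad_le; rewrite /spectral_norm.
have [ne|/nonemptyPn ->] := pselect ([set vnorm (M *m x) | x in
  [set x | vnorm x = 1]] !=set0)%classic; last by rewrite sup0.
apply: (ge_sup ne) => _ [x /= x_unit <-].
have xx : dotv x x = 1 by rewrite -(sqr_sqrtr (dotv_ge0 x)) -/(vnorm x) x_unit expr1n.
set w := M *m x; set r := vnorm w; set y := r *: x.
have ww : dotv w w = r ^+ 2 by rewrite sqr_sqrtr ?dotv_ge0.
have yy : dotv y y = r ^+ 2 by rewrite dotvZl dotvZr xx mulr1 expr2.
have wMy : dotv w (M *m y) = r ^+ 3 by rewrite -scalemxAr dotvZr -/w ww -exprS.
have polar := polarization_sym w y MT; rewrite wMy in polar.
have := dotv_parallelogram w y; rewrite ww yy => para.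
have := quad_le (w + y); have := quad_le (w - y).
rewrite !ler_norml => /andP[le_minus _] /andP[_ le_plus].
have sumK : K * dotv (w + y) (w + y) + K * dotv (w - y) (w - y) = 4 * (K * r ^+ 2).
  by rewrite -mulrDr para; ring.
have cube : r * r ^+ 2 <= K * r ^+ 2 by rewrite -exprS; lra.
rewrite leNgt; apply/negP => K_lt_r.
by move: cube; rewrite ler_pM2r ?exprn_gt0 ?(le_lt_trans K_ge0 K_lt_r) // leNgt K_lt_r.
Qed.

End SymmetricForm.

Lemma cross_term_bound (R : realType) (c S X : R) : 0 <= c <= 1 -> 0 <= S ->
  0 <= X <= 8 * (1 - c) * S -> X * (4 * S - X) <= 16 * (1 - c ^+ 2) * S ^+ 2.
Proof.
move=> /andP[c_ge0 c_le1] S_ge0 /andP[X_ge0 X_le].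
have [c_big|c_small] := leP (3/4) c.
  (* X |-> X (4S - X) increases on [0, 2S], and 8 (1 - c) S <= 2 S *)
  have : 0 <= (8 * (1 - c) * S - X) * (4 * S - 8 * (1 - c) * S - X).
    by apply: mulr_ge0; nra.
  nra.
have : 4 * S ^+ 2 <= 16 * (1 - c ^+ 2) * S ^+ 2 by rewrite ler_wpM2r ?sqr_ge0 //; nra.
have : 0 <= (X - 2 * S) ^+ 2 := sqr_ge0 _.
nra.
Qed.

Lemma orthonormal_align (R : realType) (n : nat) (I : finType) (a b : I -> 'cV[R]_n) :
  orthonormal_family b -> exists2 b' : I -> 'cV[R]_n, orthonormal_family b' &
    forall i, dotv (a i) (b' i) = `|dotv (a i) (b i)| /\ tensor2 (b' i) = tensor2 (b i).
Proof.
move=> b_on; pose s i : R := (-1) ^+ (dotv (a i) (b i) < 0)%R.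
exists (fun i => s i *: b i) => [i j|i].
  rewrite dotvZl dotvZr b_on; case: eqP => [->|_]; last by rewrite !mulr0.
  by rewrite mulr1 -expr2 sqrr_sign.
split; first by rewrite dotvZr normrEsign.
by rewrite !tensor2_tprod tprodZl tprodZr scalerA -expr2 sqrr_sign scale1r.
Qed.

Section QuarticForm.
Variables (R : realType) (d k : nat).
Implicit Types (a b : 'I_k -> 'cV[R]_d) (z : 'cV[R]_(d * d)).

Lemma trmx_quartic_diff a b : (quartic_diff a b)^T = quartic_diff a b.
Proof.
rewrite /quartic_diff linear_sum; apply: eq_bigr => i _.
by rewrite linearB /= !trmx_mul !trmxK.
Qed.

Lemma dotv_quartic_diff a b z : dotv z (quartic_diff a b *m z) =
  \sum_i (dotv (tensor2 (a i)) z ^+ 2 - dotv (tensor2 (b i)) z ^+ 2).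
Proof.
rewrite /quartic_diff mulmx_suml dotv_sumr; apply: eq_bigr => i _.
by rewrite mulmxBl dotvBr !dotv_outer.
Qed.

Lemma quartic_form_le_aligned a b (c : R) z :
  orthonormal_family a -> orthonormal_family b -> 0 <= c <= 1 ->
  (forall i, c <= dotv (a i) (b i)) ->
  `|\sum_i (dotv (tensor2 (a i)) z ^+ 2 - dotv (tensor2 (b i)) z ^+ 2)|
    <= 4 * Num.sqrt (1 - c ^+ 2) * dotv z z.
Proof.
move=> a_on b_on c01 c_le; have /andP[c_ge0 c_le1] := c01.
set S := dotv z z; have S_ge0 : 0 <= S := dotv_ge0 z.
pose u i := dotv (tensor2 (a i)) z; pose v i := dotv (tensor2 (b i)) z.
pose P i := dotv (tprod (a i) (a i - b i)) z.
pose Q i := dotv (tprod (a i - b i) (b i)) z.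
have uv_split i : u i - v i = P i + Q i.
  by rewrite -dotvBl -dotvDl tprodBr tprodBl addrA subrK.
have ab_dist i : dotv (a i - b i) (a i - b i) <= 2 - 2 * c.
  by rewrite dotv_subsqr a_on b_on eqxx mulr1n; have := c_le i; lra.
have dist_ge0 : 0 <= 2 - 2 * c by lra.
have sum_u : \sum_i u i ^+ 2 <= S.
  by rewrite -[S]mul1r; apply: (bessel_tprodl z a_on _ ler01) => i; rewrite a_on eqxx.
have sum_v : \sum_i v i ^+ 2 <= S.
  by rewrite -[S]mul1r; apply: (bessel_tprodl z b_on _ ler01) => i; rewrite b_on eqxx.
have sum_P : \sum_i P i ^+ 2 <= (2 - 2 * c) * S := bessel_tprodl z a_on ab_dist dist_ge0.
have sum_Q : \sum_i Q i ^+ 2 <= (2 - 2 * c) * S := bessel_tprodr z b_on ab_dist dist_ge0.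
set X := \sum_i (u i - v i) ^+ 2; set Y := \sum_i (u i + v i) ^+ 2.
have X_ge0 : 0 <= X by apply: sumr_ge0 => i _; apply: sqr_ge0.
have X_le : X <= 8 * (1 - c) * S.
  have : X <= 2 * \sum_i P i ^+ 2 + 2 * \sum_i Q i ^+ 2.
    rewrite !mulr_sumr -big_split; apply: ler_sum => i _ /=; rewrite uv_split.
    by have := sqr_ge0 (P i - Q i); nra.
  lra.
have XY : X + Y = 2 * \sum_i u i ^+ 2 + 2 * \sum_i v i ^+ 2.
  by rewrite -big_split !mulr_sumr -big_split; apply: eq_bigr => i _ /=; ring.
have T_le : (\sum_i (u i ^+ 2 - v i ^+ 2)) ^+ 2 <= X * Y.
  rewrite (eq_bigr (fun i => (u i - v i) * (u i + v i))) => [|i _]; last by ring.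
  exact: cauchy_schwarz_sum.
rewrite -ler_sqr ?nnegrE ?normr_ge0 ?mulr_ge0 ?sqrtr_ge0 // real_normK ?num_real //.
rewrite !exprMn sqr_sqrtr; last by rewrite subr_ge0 expr_le1.
have := cross_term_bound c01 S_ge0 (introT andP (conj X_ge0 X_le)).
have : X * Y <= X * (4 * S - X) by rewrite ler_wpM2l //; lra.
rewrite (_ : 4 ^+ 2 = 16 :> R); last by rewrite expr2; lra.
lra.
Qed.

Lemma quartic_form_le a b (eps : R) z :
  orthonormal_family a -> orthonormal_family b ->
  (forall i, 1 - eps <= dotv (a i) (b i) ^+ 2) ->
  `|\sum_i (dotv (tensor2 (a i)) z ^+ 2 - dotv (tensor2 (b i)) z ^+ 2)|
    <= 4 * Num.sqrt eps * dotv z z.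
Proof.
move=> a_on b_on ab_close.
have [eps_lt0|eps_ge0] := ltP eps 0.
  (* by Cauchy-Schwarz, eps < 0 leaves no index i *)
  rewrite big1 ?normr0 ?mulr_ge0 ?sqrtr_ge0 ?dotv_ge0 // => i _; exfalso.
  have := dotv_sqr_le (a i) (b i); rewrite a_on b_on eqxx mulr1n mulr1.
  by have := ab_close i; lra.
set c := Num.sqrt (1 - eps).
have c01 : 0 <= c <= 1 by rewrite sqrtr_ge0 -[X in _ <= X]sqrtr1 ler_wsqrtr //; lra.
have [b' b'_on b'_ab] := orthonormal_align a b_on.
under eq_bigr => i _ do rewrite -(b'_ab i).2.
apply: le_trans (quartic_form_le_aligned z a_on b'_on c01 _) _.
  by move=> i; rewrite (b'_ab i).1 -sqrtr_sqr ler_wsqrtr.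
rewrite ler_wpM2r ?dotv_ge0 // ler_wpM2l // ler_wsqrtr //.
have [eps_le1|] := leP eps 1; first by rewrite sqr_sqrtr; lra.
by have := sqr_ge0 c; lra.
Qed.

End QuarticForm.

Theorem mainTheorem10 (R : realType) (d k : nat) (eps : R)
  (a b : 'I_k -> 'cV[R]_d)
  (ha : forall i j : 'I_k, dotv (a i) (a j) = (i == j)%:R)
  (hb : forall i j : 'I_k, dotv (b i) (b j) = (i == j)%:R)
  (hab : forall i : 'I_k, 1 - eps <= dotv (a i) (b i) ^+ 2) :
  spectral_norm (quartic_diff a b) <= 4 * Num.sqrt eps.
Proof.
apply: spectral_norm_sym_le; first exact: trmx_quartic_diff.
  by rewrite mulr_ge0 ?sqrtr_ge0.
by move=> z; rewrite dotv_quartic_diff; exact: quartic_form_le.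
Qed.
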